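(* Let $\mathbb{K}$ be a non-Archimedean valued field with residue field $\mathfrak{r}$, and let $G$ be a discrete group. Set $R = \mathbb{F}_p$ if $\chi(\mathbb{K}) = p > 0$; $R = \mathbb{Q}$ if $\chi(\mathbb{K}) = \chi(\mathfrak{r}) = 0$; and $R = \mathbb{Z}$ if $\chi(\mathbb{K}) = 0$ and $\chi(\mathfrak{r}) = p > 0$. Let $n\ge 0$. If $H_n(G, R)$ is a finitely generated $R$-module, then the comparison map $c^n : H^n_b(G, \mathbb{K}) \to H^n(G, \mathbb{K})$ is surjective.
   Context: A non-Archimedean valued field is a field with an absolute value satisfying the ultrametric inequality; $\mathfrak{o}=\{|x|_\mathbb{K}\le1\}$, $\mathfrak{m}=\{|x|_\mathbb{K}<1\}$, residue field $\mathfrak{r}=\mathfrak{o}/\mathfrak{m}$, $\chi$ = characteristic. $H_n(G,R)$ is ordinary group homology with trivial coefficients. $\mathbb{K}$ is a trivial $G$-module. Bar resolution: $\overline{C}^0=\mathbb{K}$, $\overline{C}^n(G,\mathbb{K})$ = all maps $G^n\to\mathbb{K}$, $\overline{C}^n_b(G,\mathbb{K})$ = bounded such maps, with $\delta^nf(g_1,\dots,g_{n+1})=f(g_2,\dots,g_{n+1})+\sum_{i=1}^n(-1)^if(g_1,\dots,g_ig_{i+1},\dots,g_{n+1})+(-1)^{n+1}f(g_1,\dots,g_n)$. $H^\bullet(G,\mathbb{K})$ and $H^\bullet_b(G,\mathbb{K})$ are their cohomologies; the comparison map $c^n$ is induced by inclusion. *)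

From HB Require Import structures.
From mathcomp Require Import all_boot all_order all_algebra.
From mathcomp Require Import reals.
Set Implicit Arguments. Unset Strict Implicit. Unset Printing Implicit Defensive.
Import Order.TTheory GRing.Theory Num.Theory.
Local Open Scope ring_scope.

Definition nonarch_abs (K : fieldType) (V : realType) (a : K -> V) : Prop :=
  [/\ forall x, 0 <= a x,
      forall x, a x = 0 <-> x = 0,
      forall x y, a (x * y) = a x * a y
    & forall x y, a (x + y) <= Num.max (a x) (a y)].

(** Characteristic of the residue field r = o/m, o = {|x| <= 1}, m = {|x| < 1}:
    the class of n%:R in r is zero iff n%:R lies in m, i.e. |n%:R| < 1. *)
Definition residue_char_zero (K : fieldType) (V : realType) (a : K -> V) : Prop :=
  forall n : nat, (0 < n)%N -> ~ (a n%:R < 1).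
Definition residue_char_eq (K : fieldType) (V : realType) (a : K -> V) (p : nat) : Prop :=
  (0 < p)%N /\ a p%:R < 1 /\ forall m : nat, (0 < m < p)%N -> ~ (a m%:R < 1).

(** An element of G^n is encoded as a list of length n.
    [face g i] is the i-th face map  G^(n+1) -> G^n  (n+1 = size g):
      i = 0      : (g1,...,g_{n+1}) |-> (g2,...,g_{n+1})
      1<=i<=n    : |-> (g1,...,g_i g_{i+1},...,g_{n+1})
      i = n+1    : |-> (g1,...,g_n). *)
Definition face (G : groupType) (g : seq G) (i : nat) : seq G :=
  if i == 0%N then behead g
  else if i == size g then take (size g).-1 g
  else take i.-1 g ++ ((nth 1%g g i.-1 * nth 1%g g i)%g :: drop i.+1 g).

(** A chain is a finite formal R-linear combination of elements of G^n. *)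
Definition chain (R : comNzRingType) (G : groupType) := seq (R * seq G).

Definition coef (R : comNzRingType) (G : groupType) (c : chain R G) (t : seq G) : R :=
  \sum_(x <- c | x.2 == t) x.1.

Definition is_nchain (R : comNzRingType) (G : groupType) (n : nat) (c : chain R G) :=
  all (fun x => size x.2 == n) c.

Definition bd (R : comNzRingType) (G : groupType) (c : chain R G) : chain R G :=
  flatten [seq [seq ((-1) ^+ i * x.1, face x.2 i) | i <- iota 0 (size x.2).+1]
          | x <- c].

(** n-cycles (the boundary C_0 -> C_{-1} = 0 is zero). *)
Definition is_ncycle (R : comNzRingType) (G : groupType) (n : nat) (c : chain R G) :=
  is_nchain n c /\ ((0 < n)%N -> forall t, coef (bd c) t = 0).

(** H_n(G,R) = Z_n / B_n is a finitely generated R-module: finitely many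
    n-cycles whose classes generate, i.e. every n-cycle is an R-linear
    combination of them plus a boundary of an (n+1)-chain. *)
Definition homology_fg (R : comNzRingType) (G : groupType) (n : nat) : Prop :=
  exists zs : seq (chain R G),
    (forall i, (i < size zs)%N -> is_ncycle n (nth [::] zs i)) /\
    forall c : chain R G, is_ncycle n c ->
      exists (rs : seq R) (b : chain R G),
        size rs = size zs /\ is_nchain n.+1 b /\
        forall t, coef c t = \sum_(i < size zs) rs`_i * coef (nth [::] zs i) t
                             + coef (bd b) t.

(** An n-cochain is a map G^n -> K; we model it as [f : seq G -> K], of
    which only the values on lists of length n matter. *)
Definition cdelta (K : fieldType) (G : groupType) (f : seq G -> K) (g : seq G) : K :=
  \sum_(i < (size g).+1) (-1) ^+ i * f (face g i).

Definition is_ncocycle (K : fieldType) (G : groupType) (n : nat) (f : seq G -> K) :=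
  forall g : seq G, size g = n.+1 -> cdelta f g = 0.

Definition is_bounded (K : fieldType) (V : realType) (a : K -> V) (G : groupType)
    (n : nat) (f : seq G -> K) :=
  exists M : V, forall g : seq G, size g = n -> a (f g) <= M.

(** Surjectivity of the comparison map c^n : H^n_b(G,K) -> H^n(G,K):
    every n-cocycle is cohomologous (in the unbounded complex) to a bounded
    n-cocycle; for n = 0 the coboundaries are 0 (C^{-1} = 0). *)
Definition comparison_surjective (K : fieldType) (V : realType) (a : K -> V)
    (G : groupType) (n : nat) : Prop :=
  forall f : seq G -> K, is_ncocycle n f ->
    exists fb : seq G -> K,
      [/\ is_ncocycle n fb, is_bounded a n fb &
          exists h : seq G -> K, forall g : seq G, size g = n ->
            f g - fb g = (if n is 0%N then 0 else cdelta h g)].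

From HB Require Import structures.
From mathcomp Require Import all_boot all_order all_algebra.
From mathcomp Require Import finfield reals.
From mathcomp Require Import zify ring.
From mathcomp Require Import boolp classical_sets.
Set Implicit Arguments. Unset Strict Implicit. Unset Printing Implicit Defensive.
Import Order.TTheory GRing.Theory Num.Theory.
Local Open Scope ring_scope.

(* Let z_1, ..., z_k be n-cycles whose classes generate H_n(G, R), and embed R
   into K; the hypotheses on the characteristics give |r| <= 1 for every r in R.
   The periods f(z_i) of a K-valued cocycle f annihilate every R-linear relation
   between the classes [z_i], so they are a K-combination sum_j a_j e_j of
   R-vectors e_j annihilating those relations.  As R is a principal ideal domain,
   the cycles are a direct summand of the free module of chains, so each e_j is
   the period vector of an R-valued cocycle u_j.  Then f_b = sum_j a_j u_j is a
   cocycle bounded by sum_j |a_j|, and f - f_b vanishes on all cycles, hence is a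
   coboundary.  Both splittings come from Zorn's lemma, extending a partial
   solution one simplex at a time. *)

Section Chains.
Variables (R : comNzRingType) (G : groupType).
Implicit Types (c : chain R G) (t : seq G).

Definition scalec (r : R) c : chain R G := [seq (r * x.1, x.2) | x <- c].

Definition simplices c := [seq x.2 | x <- c].

Lemma coef_nil t : coef ([::] : chain R G) t = 0.
Proof. by rewrite /coef big_nil. Qed.

Lemma coef_cons x c t :
  coef (x :: c) t = (if x.2 == t then x.1 else 0) + coef c t.
Proof. by rewrite /coef big_cons; case: ifP; rewrite ?add0r. Qed.

Lemma coef_seq1 (x : R * seq G) t : coef [:: x] t = if x.2 == t then x.1 else 0.
Proof. by rewrite coef_cons coef_nil addr0. Qed.

Lemma coef_cat c c' t : coef (c ++ c') t = coef c t + coef c' t.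
Proof. by rewrite /coef big_cat. Qed.

Lemma coef_scalec r c t : coef (scalec r c) t = r * coef c t.
Proof. by rewrite /coef big_map mulr_sumr. Qed.

Lemma coef_notin c t : t \notin simplices c -> coef c t = 0.
Proof.
move=> tc; rewrite /coef big_seq_cond big1 // => x /andP[xc /eqP xt].
by case/negP: tc; rewrite -xt map_f.
Qed.

Lemma is_nchain_cat n c c' :
  is_nchain n (c ++ c') = is_nchain n c && is_nchain n c'.
Proof. exact: all_cat. Qed.

Lemma is_nchain_scalec n r c : is_nchain n (scalec r c) = is_nchain n c.
Proof. exact: all_map. Qed.

Lemma bd_cat c c' : bd (c ++ c') = bd c ++ bd c'.
Proof. by rewrite /bd map_cat flatten_cat. Qed.

Lemma coef_bd_cat c c' t : coef (bd (c ++ c')) t = coef (bd c) t + coef (bd c') t.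
Proof. by rewrite bd_cat coef_cat. Qed.

Lemma coef_bd c t : coef (bd c) t =
  \sum_(x <- c) \sum_(j < (size x.2).+1)
     (if face x.2 j == t then (-1) ^+ j * x.1 else 0).
Proof.
rewrite /coef /bd big_flatten big_map; apply: eq_bigr => x _.
rewrite big_map big_mkcond /= -(big_mkord xpredT
  (fun j => if face x.2 j == t then (-1) ^+ j * x.1 else 0)).
by rewrite /index_iota subn0.
Qed.

Lemma coef_bd_scalec r c t : coef (bd (scalec r c)) t = r * coef (bd c) t.
Proof.
rewrite !coef_bd big_map mulr_sumr; apply: eq_bigr => x _.
rewrite mulr_sumr; apply: eq_bigr => j _ /=.
by case: ifP; rewrite ?mulr0 // mulrCA.
Qed.

End Chains.

Section Pairing.
Variables (R S : comNzRingType) (rho : {rmorphism R -> S}) (G : groupType).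
Implicit Types (c : chain R G) (t : seq G) (f : seq G -> S).

Definition pairing f c := \sum_(x <- c) rho x.1 * f x.2.

Lemma pairing_nil f : pairing f [::] = 0.
Proof. by rewrite /pairing big_nil. Qed.

Lemma pairing_seq1 f r t : pairing f [:: (r, t)] = rho r * f t.
Proof. by rewrite /pairing big_seq1. Qed.

Lemma pairing_cat f c c' : pairing f (c ++ c') = pairing f c + pairing f c'.
Proof. by rewrite /pairing big_cat. Qed.

Lemma pairing_scalec f r c : pairing f (scalec r c) = rho r * pairing f c.
Proof.
rewrite /pairing big_map mulr_sumr.
by apply: eq_bigr => x _; rewrite rmorphM mulrA.
Qed.

Lemma pairing_coefE f c (L : seq (seq G)) : uniq L -> {subset simplices c <= L} ->
  pairing f c = \sum_(t <- L) rho (coef c t) * f t.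
Proof.
move=> uL; elim: c => [|x c IH] cL.
  by rewrite pairing_nil big1 // => t _; rewrite coef_nil rmorph0 mul0r.
rewrite /pairing big_cons -/(pairing f c) IH => [|t tc]; last first.
  by apply: cL; rewrite inE tc orbT.
under [in RHS]eq_bigr => t _ do rewrite coef_cons rmorphD mulrDl.
rewrite big_split /=; congr (_ + _).
have xL : x.2 \in L by apply: cL; rewrite mem_head.
rewrite (bigD1_seq x.2) //= eqxx big1 ?addr0 // => t /negbTE tx.
by rewrite eq_sym tx rmorph0 mul0r.
Qed.

Lemma eq_pairing_coef f c c' : coef c =1 coef c' -> pairing f c = pairing f c'.
Proof.
move=> cc'; set L := undup (simplices c ++ simplices c').
have uL : uniq L by apply: undup_uniq.
rewrite (@pairing_coefE f c L) ?(@pairing_coefE f c' L) //.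
- by apply: eq_bigr => t _; rewrite cc'.
- by move=> t tc; rewrite mem_undup mem_cat tc orbT.
- by move=> t tc; rewrite mem_undup mem_cat tc.
Qed.

Lemma eq_pairing_supp f f' c :
  (forall t, coef c t != 0 -> f t = f' t) -> pairing f c = pairing f' c.
Proof.
move=> ff'; have sub : {subset simplices c <= undup (simplices c)}.
  by move=> t; rewrite mem_undup.
rewrite !(pairing_coefE _ (undup_uniq _) sub); apply: eq_bigr => t _.
by have [->|/ff' ->] := eqVneq (coef c t) 0; rewrite ?rmorph0 ?mul0r.
Qed.

Lemma pairing_subf f f' c :
  pairing (fun t => f t - f' t) c = pairing f c - pairing f' c.
Proof. by rewrite /pairing -sumrB; apply: eq_bigr => x _; rewrite mulrBr. Qed.

End Pairing.

Section CochainPairing.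
Variables (R : comNzRingType) (K : fieldType) (rho : {rmorphism R -> K}).
Variable G : groupType.
Implicit Types (c : chain R G) (f : seq G -> K).

Lemma pairing_bd f c : pairing rho f (bd c) = pairing rho (cdelta f) c.
Proof.
rewrite /pairing /bd big_flatten big_map; apply: eq_bigr => x _.
rewrite big_map /cdelta mulr_sumr.
rewrite -(big_mkord xpredT (fun i => rho x.1 * ((-1) ^+ i * f (face x.2 i)))).
rewrite /index_iota subn0; apply: eq_bigr => i _ /=.
by rewrite rmorphM rmorphXn rmorphN1 mulrCA mulrA.
Qed.

Lemma cdelta_pairing f g : cdelta f g = pairing rho f (bd [:: (1, g)]).
Proof. by rewrite pairing_bd pairing_seq1 rmorph1 mul1r. Qed.

Lemma cdelta_subf f f' g :
  cdelta (fun s => f s - f' s) g = cdelta f g - cdelta f' g.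
Proof. by rewrite /cdelta -sumrB; apply: eq_bigr => i _; rewrite mulrBr. Qed.

Lemma pairing_cocycle_bd n f c :
  is_ncocycle n f -> is_nchain n.+1 c -> pairing rho f (bd c) = 0.
Proof.
move=> cf nc; rewrite pairing_bd /pairing big_seq big1 // => x xc.
by rewrite cf ?mulr0 //; apply/eqP; apply: (allP nc).
Qed.

Lemma pairing_sum_cochains N (a : nat -> K) (u : nat -> seq G -> R) c :
  pairing rho (fun t => \sum_(j < N) a j * rho (u j t)) c =
  \sum_(j < N) a j * rho (pairing idfun (u j) c).
Proof.
rewrite /pairing; under eq_bigr => x _ do rewrite mulr_sumr.
rewrite exchange_big /=; apply: eq_bigr => j _.
rewrite rmorph_sum mulr_sumr; apply: eq_bigr => x _.
by rewrite rmorphM /= mulrCA.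
Qed.

End CochainPairing.

Section LinearCombination.
Variables (R : comNzRingType) (G : groupType) (zs : seq (chain R G)).
Local Notation k := (size zs).

Definition lincomb (r : nat -> R) : chain R G :=
  flatten [seq scalec (r i) (nth [::] zs i) | i <- iota 0 k].

Lemma coef_lincomb r t : coef (lincomb r) t = \sum_(i < k) r i * coef (nth [::] zs i) t.
Proof.
rewrite /coef /lincomb big_flatten big_map.
rewrite -(big_mkord xpredT (fun i => r i * coef (nth [::] zs i) t)).
by rewrite /index_iota subn0; apply: eq_bigr => i _; rewrite big_map mulr_sumr.
Qed.

Lemma pairing_lincomb (S : comNzRingType) (rho : {rmorphism R -> S}) f r :
  pairing rho f (lincomb r) = \sum_(i < k) rho (r i) * pairing rho f (nth [::] zs i).
Proof.
rewrite /pairing /lincomb big_flatten big_map.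
rewrite -(big_mkord xpredT (fun i => rho (r i) * pairing rho f (nth [::] zs i))).
rewrite /index_iota subn0; apply: eq_bigr => i _.
by rewrite -/(pairing rho f (scalec (r i) (nth [::] zs i))) pairing_scalec.
Qed.

End LinearCombination.

Section Faces.
Variable G : groupType.
Implicit Types g : seq G.

Definition face_entry g (i k : nat) : G :=
  if (k.+1 < i)%N then nth 1%g g k
  else if k.+1 == i then (nth 1%g g k * nth 1%g g k.+1)%g
  else nth 1%g g k.+1.

Lemma size_face g N i : size g = N.+1 -> (i <= N.+1)%N -> size (face g i) = N.
Proof.
move=> sg iN; rewrite /face; case: eqP => [_|/eqP i0].
  by rewrite size_behead sg.
case: eqP => [_|/eqP iS]; first by rewrite size_take sg ltnSn.
rewrite size_cat /= size_take size_drop sg.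
have -> : (i.-1 < N.+1)%N by lia.
lia.
Qed.

Lemma nth_face g N i k : size g = N.+1 -> (i <= N.+1)%N -> (k < N)%N ->
  nth 1%g (face g i) k = face_entry g i k.
Proof.
move=> sg iN kN; rewrite /face /face_entry; case: eqP => [->|/eqP i0].
  by rewrite nth_behead.
case: eqP => [iS|/eqP iS].
  by rewrite nth_take ?sg //; have -> : (k.+1 < i)%N by lia.
rewrite nth_cat size_take sg; have -> : (i.-1 < N.+1)%N by lia.
case: (ltnP k i.-1) => ki.
  have -> : (k.+1 < i)%N by lia.
  by rewrite nth_take.
have -> : (k.+1 < i)%N = false by lia.
case: (eqVneq k i.-1) => [->|kne].
  by rewrite eqn_leq ?prednK ?leqnn ?subnn //=; lia.
have -> : (k.+1 == i) = false by apply/eqP; lia.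
have -> : (k - i.-1)%N = (k - i.-1).-1.+1 by lia.
by rewrite /= nth_drop; congr nth; lia.
Qed.

Lemma face_face g N i j : size g = N.+1 -> (i <= j <= N)%N -> (0 < N)%N ->
  face (face g i) j = face (face g j.+1) i.
Proof.
move=> sg /andP[ij jN] N0; have hN : N = N.-1.+1 by lia.
have s1 : size (face g i) = N.-1.+1 by rewrite -hN; apply: size_face => //; lia.
have s2 : size (face g j.+1) = N.-1.+1 by rewrite -hN; apply: size_face => //; lia.
have jN' : (j <= N.-1.+1)%N by lia.
have iN' : (i <= N.-1.+1)%N by lia.
apply: (@eq_from_nth _ 1%g); first by rewrite (size_face s1 jN') (size_face s2 iN').
move=> k; rewrite (size_face s1 jN') => kN.
rewrite (nth_face s1 jN' kN) (nth_face s2 iN' kN) /face_entry.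
rewrite !(nth_face sg) /face_entry; try lia.
by repeat case: ifP => ?; try (exfalso; lia); rewrite ?mulgA //; congr (nth _ _ _ * _)%g; lia.
Qed.

Lemma bd_nchain (R : comNzRingType) n (c : chain R G) :
  is_nchain n.+1 c -> is_nchain n (bd c).
Proof.
move=> nc; apply/allP => y /flattenP[s /mapP[x xc ->]] /mapP[i].
rewrite mem_iota add0n => /andP[_ ilt] -> /=.
have /eqP sx := allP nc x xc; rewrite sx in ilt.
by rewrite (size_face sx ilt).
Qed.

Lemma coef_bd_bd_seq1 (R : comNzRingType) (a : R) g t : (1 < size g)%N ->
  coef (bd (bd [:: (a, g)])) t = 0.
Proof.
move=> sg2; set N := (size g).-1.
have sg : size g = N.+1 by rewrite /N; lia.
have -> : bd [:: (a, g)] = [seq ((-1) ^+ i * a, face g i) | i <- iota 0 N.+2].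
  by rewrite /bd /= cats0 sg.
have -> : iota 0 N.+2 = index_iota 0 N.+2 by rewrite /index_iota subn0.
rewrite coef_bd big_map big_mkord.
have E : forall i : 'I_N.+2, \sum_(j < (size (face g i)).+1)
      (if face (face g i) j == t then (-1) ^+ j * ((-1) ^+ i * a) else 0) =
    \sum_(j < N.+1) (if face (face g i) j == t then (-1) ^+ (i + j) * a else 0).
  move=> i; rewrite (@size_face _ N) //; last by have := ltn_ord i; lia.
  by apply: eq_bigr => j _; rewrite mulrA -exprD addnC.
rewrite (eq_bigr _ (fun i _ => E i)) {E} pair_big /=.
rewrite (bigID (fun p : 'I_N.+2 * 'I_N.+1 => (p.1 <= p.2)%N)) /=.
(* By face_face, sigma matches the term (i, j), i <= j, with the term (j.+1, i) of opposite sign. *)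
pose sigma (p : 'I_N.+2 * 'I_N.+1) : 'I_N.+2 * 'I_N.+1 :=
  if (p.1 <= p.2)%N then (inord p.2.+1, inord p.1) else (inord p.2, inord p.1.-1).
have sigmaK : involutive sigma.
  move=> [i j]; rewrite /sigma /=; have hi := ltn_ord i; have hj := ltn_ord j.
  case: (leqP i j) => ij /=; rewrite !inordK; try lia.
    have -> : (j.+1 <= i)%N = false by lia.
    by congr (_, _); apply: val_inj; rewrite /= inordK //=; lia.
  have -> : (j <= i.-1)%N by lia.
  by congr (_, _); apply: val_inj; rewrite /= inordK //=; lia.
rewrite (reindex_inj (inv_inj sigmaK)) /=.
apply/eqP; rewrite addr_eq0 -sumrN; apply/eqP.
apply: eq_big => [[i j]|[i j] /=]; rewrite /sigma /=;
  have hi := ltn_ord i; have hj := ltn_ord j.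
  by case: (leqP i j) => ij /=; rewrite !inordK; try lia.
case: (leqP i j) => ij /=; rewrite !inordK; try lia.
move=> _; have -> : i = i.-1.+1 :> nat by lia.
rewrite -(@face_face g N j i.-1) // ?prednK; try lia.
case: eqP => _; last by rewrite oppr0.
have -> : (i + j = (j + i.-1).+1)%N by lia.
by rewrite exprS mulN1r mulNr opprK.
Qed.

Lemma eq_coef_bd (R : comNzRingType) (c c' : chain R G) :
  coef c =1 coef c' -> coef (bd c) =1 coef (bd c').
Proof.
move=> cc' t; pose beta s : R :=
  \sum_(j < (size s).+1) (if face s j == t then (-1) ^+ j else 0).
suff coef_bdE d : coef (bd d) t = pairing idfun beta d by rewrite !coef_bdE; apply: eq_pairing_coef.
rewrite coef_bd /pairing; apply: eq_bigr => x _; rewrite mulr_sumr.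
by apply: eq_bigr => j _ /=; case: ifP; rewrite ?mulr0 // mulrC.
Qed.

End Faces.

Section Annihilator.
Variables (R : idomainType) (K : fieldType) (rho : {rmorphism R -> K}).
Hypothesis rho_inj : injective rho.
Implicit Types (W : (nat -> R) -> Prop) (k : nat).

Definition comb_closed W :=
  forall a b w w', W w -> W w' -> W (fun i => a * w i + b * w' i).

Definition spans_annihilator k W (es : seq (nat -> R)) :=
  (forall j, (j < size es)%N -> forall w, W w ->
     \sum_(i < k) w i * nth (fun _ => 0) es j i = 0) /\
  (forall v : nat -> K, (forall w, W w -> \sum_(i < k) rho (w i) * v i = 0) ->
     exists a : nat -> K, forall i, (i < k)%N ->
       v i = \sum_(j < size es) a j * rho (nth (fun _ => 0) es j i)).

Definition kernel_slice k W (x : nat -> R) :=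
  exists w, [/\ W w, w k = 0 & forall i, (i < k)%N -> w i = x i].

Lemma comb_closed_kernel_slice k W : comb_closed W -> comb_closed (kernel_slice k W).
Proof.
move=> WC a b x x' [w [Ww wk wx]] [w' [Ww' wk' wx']].
exists (fun i => a * w i + b * w' i); split; first exact: WC.
  by rewrite wk wk' !mulr0 addr0.
by move=> i ik; rewrite wx ?wx'.
Qed.

Lemma annihilator_kernel_slice k W (v : nat -> K) :
  (forall w, W w -> \sum_(i < k.+1) rho (w i) * v i = 0) ->
  forall x, kernel_slice k W x -> \sum_(i < k) rho (x i) * v i = 0.
Proof.
move=> Wv x [w [Ww wk wx]]; have := Wv w Ww.
rewrite big_ord_recr /= wk rmorph0 mul0r addr0 => wv0.
by rewrite -[RHS]wv0; apply: eq_bigr => i _; rewrite wx.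
Qed.

(* For [w] in [W], [ws k * w - w k * ws] lies in the slice; this avoids dividing in [R]. *)
Lemma spans_annihilator_pivot k W ws es : comb_closed W -> W ws -> ws k != 0 ->
  spans_annihilator k (kernel_slice k W) es ->
  spans_annihilator k.+1 W
    [seq (fun i => if (i < k)%N then ws k * e i
                  else if i == k then - \sum_(i' < k) ws i' * e i' else 0) | e <- es].
Proof.
move=> WC Wws wsk [orth span]; set m := ws k; split.
  move=> j; rewrite size_map => jl w Ww.
  rewrite (nth_map (fun _ => 0)) // big_ord_recr /= ltnn eqxx.
  under eq_bigr => i _ do rewrite ltn_ord mulrCA mulrA.
  rewrite mulrN mulr_sumr -sumrB -[RHS](orth j jl (fun i => m * w i - w k * ws i)).
    by apply: eq_bigr => i _; rewrite mulrBl mulrA.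
  exists (fun i => m * w i + (- w k) * ws i); split; first exact: WC.
    by rewrite mulNr mulrC addrN.
  by move=> i _; rewrite mulNr.
move=> v Wv; have [a Ha] := span v (annihilator_kernel_slice Wv).
have im0 : rho m != 0 by rewrite raddf_eq0.
exists (fun j => a j / rho m) => i; rewrite size_map ltnS leq_eqVlt.
case/orP=> [/eqP ->|ik]; last first.
  rewrite Ha //; apply: eq_bigr => j _.
  by rewrite (nth_map (fun _ => 0)) // ik rmorphM mulrA mulfVK.
under eq_bigr => j _ do rewrite (nth_map (fun _ => 0)) // ltnn eqxx.
have /eqP := Wv ws Wws; rewrite big_ord_recr /= -/m addr_eq0 => /eqP vk.
apply: (mulfI im0); rewrite -[rho m * v k]opprK -vk mulr_sumr.
set e := nth (fun _ => 0) es.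
rewrite (eq_bigr (fun j : 'I_(size es) =>
  - \sum_(i' < k) a j * rho (ws i' * e j i'))); last first.
  move=> j _; rewrite mulrA mulrCA (divff im0) mulr1 rmorphN rmorph_sum.
  by rewrite mulrN mulr_sumr.
rewrite sumrN exchange_big /=; congr (- _); apply: eq_bigr => i' _.
rewrite (Ha i' (ltn_ord i')) mulr_sumr; apply: eq_bigr => j _.
by rewrite rmorphM mulrCA.
Qed.

Lemma spans_annihilator_free k W es : (forall w, W w -> w k = 0) ->
  spans_annihilator k (kernel_slice k W) es ->
  spans_annihilator k.+1 W
    (rcons [seq (fun i => if (i < k)%N then e i else 0) | e <- es]
           (fun i => (i == k)%:R)).
Proof.
move=> Wk [orth span]; set es' := [seq _ | e <- es].
have nth_es' j : (j < size es)%N ->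
    nth (fun _ => 0) (rcons es' (fun i => (i == k)%:R)) j =
    fun i => if (i < k)%N then nth (fun _ => 0) es j i else 0.
  by move=> jl; rewrite nth_rcons size_map jl (nth_map (fun _ => 0)).
have nth_last : nth (fun _ => 0) (rcons es' (fun i => (i == k)%:R)) (size es) =
    fun i => (i == k)%:R by rewrite nth_rcons size_map ltnn eqxx.
split.
  move=> j; rewrite size_rcons size_map ltnS leq_eqVlt.
  case/orP=> [/eqP ->|jl] w Ww; rewrite ?nth_last ?nth_es' //.
    rewrite big_ord_recr /= eqxx Wk // mul0r addr0.
    by apply: big1 => i _; rewrite (ltn_eqF (ltn_ord i)) mulr0.
  rewrite big_ord_recr /= ltnn mulr0 addr0 -[RHS](orth j jl w).
    by apply: eq_bigr => i _; rewrite ltn_ord.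
  by exists w; split=> //; apply: Wk.
move=> v Wv; have [a Ha] := span v (annihilator_kernel_slice Wv).
exists (fun j => if (j < size es)%N then a j else v k) => i ik.
rewrite size_rcons size_map big_ord_recr /= nth_last ltnn.
under eq_bigr => j _ do rewrite ltn_ord nth_es' //.
move: ik; rewrite ltnS leq_eqVlt => /orP[/eqP ->|ik].
  rewrite eqxx rmorph1 mulr1 big1 ?add0r // => j _.
  by rewrite ltnn rmorph0 mulr0.
rewrite (ltn_eqF ik) rmorph0 mulr0 addr0 Ha //.
by apply: eq_bigr => j _; rewrite ik.
Qed.

Lemma annihilator_span k W : comb_closed W -> exists es, spans_annihilator k W es.
Proof.
elim: k W => [|k IH] W WC.
  by exists [::]; split=> // v _; exists (fun _ => 0).
have [es span] := IH _ (@comb_closed_kernel_slice k _ WC).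
have [[ws [Wws wsk]]|noW] := pselect (exists ws, W ws /\ ws k != 0).
  by eexists; apply: (spans_annihilator_pivot WC Wws wsk span).
have Wk w : W w -> w k = 0.
  by move=> Ww; apply/eqP/contraT => wk; case: noW; exists w.
by eexists; apply: (spans_annihilator_free Wk span).
Qed.

End Annihilator.

Section ZornExhaust.
Variables (T : Type) (X : eqType) (le : T -> T -> Prop) (dom : T -> X -> Prop).
Hypothesis le_refl : forall s, le s s.
Hypothesis le_trans : forall r s t, le r s -> le s t -> le r t.
Hypothesis dom_le : forall s t x, le s t -> dom s x -> dom t x.

Definition chain_in (A : T -> Prop) := forall s t, A s -> A t -> le s t \/ le t s.

Lemma chain_cover_seq (A : T -> Prop) s0 : chain_in A -> A s0 ->
  forall L : seq X, (forall x, x \in L -> exists s, A s /\ dom s x) ->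
  exists s, A s /\ forall x, x \in L -> dom s x.
Proof.
move=> chA As0; elim=> [|x L IH] HL; first by exists s0.
have [s1 [As1 H1]] := IH (fun z zL => HL z (mem_behead (s := x :: L) zL)).
have [s2 [As2 H2]] := HL x (mem_head _ _).
have [le12|le21] := chA s1 s2 As1 As2.
  by exists s2; split=> // z; rewrite inE => /orP[/eqP->//|/H1/(dom_le le12)].
by exists s1; split=> // z; rewrite inE => /orP[/eqP->|/H1//]; apply: (dom_le le21 H2).
Qed.

Lemma zorn_exhaust (s0 : T) : (forall s, le s0 s) ->
  (forall A, A s0 -> chain_in A -> exists ub, forall s, A s -> le s ub) ->
  (forall s x, ~ dom s x -> exists2 t, le s t & dom t x) ->
  exists s, forall x, dom s x.
Proof.
move=> le0 ub ext; pose leb s t := `[< le s t >].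
have [|r s t /asboolP rs /asboolP st|A chA|s smax] := @ZL_preorder T s0 leb.
- by move=> s; apply/asboolP.
- by apply/asboolP; apply: le_trans st.
- have chA' : chain_in (fun s => A s \/ s = s0).
    move=> s t [As|->] [At|->]; try by [left | right].
    by have [/asboolP|/asboolP] := chA s t As At; [left|right].
  have [u Hu] := ub _ (or_intror erefl) chA'.
  by exists u => s As; apply/asboolP; apply: Hu; left.
exists s => x; apply: contrapT => nx; have [t st tx] := ext s x nx.
have /asboolP ts := smax t (asboolT st).
by case: nx; apply: dom_le ts tx.
Qed.

End ZornExhaust.

Section BoundarySupport.
Variables (R : comNzRingType) (G : groupType) (n : nat).
Implicit Types (Y : seq G -> Prop) (c : chain R G).

Definition bd_supported Y c :=
  is_nchain n c /\ forall t, coef (bd c) t != 0 -> Y t.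

Definition bd_support c := [seq t <- simplices (bd c) | coef (bd c) t != 0].

Lemma bd_supportedE Y c :
  bd_supported Y c <-> is_nchain n c /\ forall t, t \in bd_support c -> Y t.
Proof.
split=> -[nc Yc]; split=> // t; first by rewrite mem_filter => /andP[/Yc].
move=> nz; apply: Yc; rewrite mem_filter nz /=.
by apply: contraR nz => /coef_notin ->.
Qed.

Lemma bd_supported_nil Y : bd_supported Y [::].
Proof. by split=> // t; rewrite /bd /= coef_nil eqxx. Qed.

Lemma bd_supported_cat Y c c' :
  bd_supported Y c -> bd_supported Y c' -> bd_supported Y (c ++ c').
Proof.
move=> [nc Yc] [nc' Yc']; split; first by rewrite is_nchain_cat nc nc'.
move=> t; rewrite coef_bd_cat; have [->|/Yc//] := eqVneq (coef (bd c) t) 0.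
by rewrite add0r => /Yc'.
Qed.

Lemma bd_supported_scalec Y r c : bd_supported Y c -> bd_supported Y (scalec r c).
Proof.
move=> [nc Yc]; split; first by rewrite is_nchain_scalec.
move=> t; rewrite coef_bd_scalec; have [->|/Yc//] := eqVneq (coef (bd c) t) 0.
by rewrite mulr0 eqxx.
Qed.

Lemma bd_supported_sub Y Y' c :
  (forall t, Y t -> Y' t) -> bd_supported Y c -> bd_supported Y' c.
Proof. by move=> YY' [nc Yc]; split=> // t /Yc /YY'. Qed.

Lemma bd_supported_elim Y y b c c0 :
  bd_supported (fun t => Y t \/ t = y) c -> bd_supported (fun t => Y t \/ t = y) c0 ->
  coef (bd c) y + b * coef (bd c0) y = 0 -> bd_supported Y (c ++ scalec b c0).
Proof.
move=> cY c0Y cy; have [nc Yc] := bd_supported_cat cY (bd_supported_scalec b c0Y).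
split=> // t nz; have [ety|ty] := eqVneq t y.
  by move: nz; rewrite ety coef_bd_cat coef_bd_scalec cy eqxx.
by case: (Yc t nz) => // /eqP; rewrite (negbTE ty).
Qed.

End BoundarySupport.

Definition principal_ideals (R : comNzRingType) :=
  forall I : R -> Prop, I 0 -> (forall a b x y, I x -> I y -> I (a * x + b * y)) ->
  exists2 d, I d & forall x, I x -> exists q, x = q * d.

Section CycleFunctional.
Variables (R : idomainType) (G : groupType) (n : nat) (lam : chain R G -> R).
Hypothesis R_pid : principal_ideals R.
Implicit Types (Y : seq G -> Prop) (c : chain R G) (L : chain R G -> R).
Local Notation supp := (bd_supported n).
Local Notation is_cycle := (supp (fun _ => False)).

Hypothesis lamD : forall c c', is_cycle c -> is_cycle c' -> lam (c ++ c') = lam c + lam c'.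
Hypothesis lamZ : forall r c, is_cycle c -> lam (scalec r c) = r * lam c.
Hypothesis lamE : forall c c', is_cycle c -> is_cycle c' -> coef c =1 coef c' ->
  lam c = lam c'.

Definition extends_on Y L :=
  [/\ forall c c', supp Y c -> supp Y c' -> L (c ++ c') = L c + L c',
      forall r c, supp Y c -> L (scalec r c) = r * L c,
      forall c c', supp Y c -> supp Y c' -> coef c =1 coef c' -> L c = L c'
    & forall c, is_cycle c -> L c = lam c].

Section ExtensionStep.
Variables (Y : seq G -> Prop) (L : chain R G -> R) (y : seq G) (c0 : chain R G).
Hypotheses (YL : extends_on Y L) (Yy : ~ Y y).
Let Y' t := Y t \/ t = y.
Let d := coef (bd c0) y.
Hypothesis c0Y' : supp Y' c0.
(* When [d = 0] the quotients below are arbitrary, so [c0] must not contribute. *)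
Hypothesis c0nil : d = 0 -> c0 = [::].
Hypothesis d_gen : forall c, supp Y' c -> exists q, coef (bd c) y = q * d.

Let quot c := if pselect (exists q, coef (bd c) y = q * d) is left H
  then projT1 (cid H) else 0.

Let quotP c : supp Y' c -> coef (bd c) y = quot c * d.
Proof.
rewrite /quot => cY'; case: pselect => [H|[]]; last exact: d_gen.
by case: (cid H).
Qed.

(* Subtracting the right multiple of [c0] removes [y] from the boundary support. *)
Definition step_functional c := L (c ++ scalec (- quot c) c0).

Let step_functionalE c r : supp Y' c -> coef (bd c) y = r * d ->
  supp Y (c ++ scalec (- r) c0) /\ step_functional c = L (c ++ scalec (- r) c0).
Proof.
move=> cY' cr; split.
  by apply: (@bd_supported_elim _ _ n Y y) => //; rewrite cr mulNr addrN.
rewrite /step_functional; have [/c0nil ->|dn0] := eqVneq d 0; first by [].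
by congr (L (_ ++ scalec (- _) c0)); apply: (mulIf dn0); rewrite -quotP.
Qed.

Lemma extends_on_step : extends_on Y' step_functional.
Proof.
case: YL => LD LZ LE Llam.
have quot_supp c : supp Y' c -> supp Y (c ++ scalec (- quot c) c0).
  by move=> cY'; case: (step_functionalE cY' (quotP cY')).
split.
- move=> c c' cY' c'Y'; have cc'Y' := bd_supported_cat cY' c'Y'.
  have q_cat : coef (bd (c ++ c')) y = (quot c + quot c') * d.
    by rewrite coef_bd_cat !quotP ?mulrDl.
  have [sY ->] := step_functionalE cc'Y' q_cat.
  have [qY q'Y] := (quot_supp _ cY', quot_supp _ c'Y').
  rewrite /step_functional -LD //; apply: LE sY (bd_supported_cat qY q'Y) _.
  by move=> t; rewrite !(coef_cat, coef_scalec); ring.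
- move=> a c cY'; have acY' := bd_supported_scalec a cY'.
  have q_scale : coef (bd (scalec a c)) y = (a * quot c) * d.
    by rewrite coef_bd_scalec quotP ?mulrA.
  have [sY ->] := step_functionalE acY' q_scale.
  have qY := quot_supp _ cY'.
  rewrite /step_functional -LZ //; apply: LE sY (bd_supported_scalec a qY) _.
  by move=> t; rewrite !(coef_cat, coef_scalec); ring.
- move=> c c' cY' c'Y' cc'.
  have q_eq : coef (bd c') y = quot c * d by rewrite -(eq_coef_bd cc') quotP.
  have [sY ->] := step_functionalE c'Y' q_eq.
  by apply: LE (quot_supp _ cY') sY _ => t; rewrite !coef_cat cc'.
- move=> c cc; have cY' : supp Y' c by apply: bd_supported_sub cc => t [].
  have q0 : coef (bd c) y = 0 * d by rewrite mul0r; apply/eqP/contraT => /(proj2 cc).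
  have [sY ->] := step_functionalE cY' q0.
  have cY : supp Y c by apply: bd_supported_sub cc => t [].
  rewrite -(Llam c cc); apply: LE sY cY _.
  by move=> t; rewrite coef_cat coef_scalec oppr0 mul0r addr0.
Qed.

Lemma step_functional_agree c : supp Y c -> step_functional c = L c.
Proof.
move=> cY; have cY' : supp Y' c by apply: bd_supported_sub cY => t; left.
have q0 : coef (bd c) y = 0 * d by rewrite mul0r; apply/eqP/contraT => /(proj2 cY).
have [sY ->] := step_functionalE cY' q0.
case: YL => _ _ LE _; apply: LE => //.
by move=> t; rewrite coef_cat coef_scalec oppr0 mul0r addr0.
Qed.

End ExtensionStep.

Lemma extends_on_extend Y L y : extends_on Y L -> ~ Y y ->
  exists L', extends_on (fun t => Y t \/ t = y) L' /\ forall c, supp Y c -> L' c = L c.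
Proof.
move=> YL Yy; set Y' := fun t => Y t \/ t = y.
pose I x := exists c, supp Y' c /\ coef (bd c) y = x.
have I0 : I 0 by exists [::]; split; [apply: bd_supported_nil | rewrite /bd /= coef_nil].
have Icomb a b x z : I x -> I z -> I (a * x + b * z).
  move=> [c [cY' <-]] [c' [c'Y' <-]]; exists (scalec a c ++ scalec b c').
  split; first by apply: bd_supported_cat; apply: bd_supported_scalec.
  by rewrite coef_bd_cat !coef_bd_scalec.
have [d Id d_gen] := R_pid I0 Icomb.
have [c0 [c0Y' c0d c0nil]] :
    exists c0, [/\ supp Y' c0, coef (bd c0) y = d & d = 0 -> c0 = [::]].
  have [d0|/negbTE dn0] := eqVneq d 0.
    exists [::]; split=> //; first exact: bd_supported_nil.
    by rewrite /bd /= coef_nil d0.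
  by case: Id => c0 [c0Y' c0d]; exists c0; split=> // d0; rewrite d0 eqxx in dn0.
have c0gen c : supp Y' c -> exists q, coef (bd c) y = q * coef (bd c0) y.
  by move=> cY'; rewrite c0d; apply: d_gen; exists c.
rewrite -c0d in c0nil.
exists (step_functional L y c0); split; first exact: extends_on_step.
by move=> c; apply: step_functional_agree.
Qed.

Definition ext_state := {p : (seq G -> Prop) * (chain R G -> R) | extends_on p.1 p.2}.

Definition ext_le (s s' : ext_state) :=
  (forall t, (sval s).1 t -> (sval s').1 t) /\
  (forall c, supp (sval s).1 c -> (sval s).2 c = (sval s').2 c).

Lemma extends_on_cycles : extends_on (fun _ => False) lam.
Proof. by split. Qed.

Definition ext_bottom : ext_state := exist _ (fun _ => False, lam) extends_on_cycles.

Section ExtChainUnion.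
Variable A : ext_state -> Prop.
Hypotheses (chA : chain_in ext_le A) (A0 : A ext_bottom).

Let dom (s : ext_state) t := (sval s).1 t.

Let dom_le s s' t : ext_le s s' -> dom s t -> dom s' t.
Proof. by case=> + _; apply. Qed.

Definition ext_union_dom t := exists2 s, A s & dom s t.

Definition ext_union_functional c :=
  if pselect (exists s, A s /\ supp (sval s).1 c) is left H
  then (sval (sval (cid H))).2 c else lam c.

Lemma ext_union_functionalE s c : A s -> supp (sval s).1 c -> ext_union_functional c = (sval s).2 c.
Proof.
move=> As cs; rewrite /ext_union_functional; case: pselect => [H|[]]; last by exists s.
case: (cid H) => s' [As' cs'] /=.
by have [[_ ->]|[_ ->]] := chA As As'.
Qed.

Lemma ext_union_cover2 c c' : supp ext_union_dom c -> supp ext_union_dom c' ->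
  exists s, [/\ A s, supp (sval s).1 c & supp (sval s).1 c'].
Proof.
move=> /bd_supportedE[nc cU] /bd_supportedE[nc' c'U].
have [|s [As sL]] := @chain_cover_seq _ _ ext_le dom dom_le A _ chA A0
  (bd_support c ++ bd_support c').
  by move=> t; rewrite mem_cat => /orP[/cU|/c'U] [s As st]; exists s.
by exists s; split=> //; apply/bd_supportedE; split=> // t tc; apply: sL;
  rewrite mem_cat tc ?orbT.
Qed.

Lemma extends_on_union : extends_on ext_union_dom ext_union_functional.
Proof.
split.
- move=> c c' cU c'U; have [s [As cs c's]] := ext_union_cover2 cU c'U.
  have [LD _ _ _] := svalP s.
  by rewrite !(ext_union_functionalE As) ?LD //; apply: bd_supported_cat.
- move=> r c cU; have [s [As cs _]] := ext_union_cover2 cU cU.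
  have [_ LZ _ _] := svalP s.
  by rewrite !(ext_union_functionalE As) ?LZ //; apply: bd_supported_scalec.
- move=> c c' cU c'U cc'; have [s [As cs c's]] := ext_union_cover2 cU c'U.
  have [_ _ LE _] := svalP s.
  by rewrite !(ext_union_functionalE As) // (LE _ _ cs c's cc').
- by move=> c cc; rewrite (ext_union_functionalE A0).
Qed.

Definition ext_union : ext_state := exist _ (ext_union_dom, ext_union_functional) extends_on_union.

Lemma ext_union_ub s : A s -> ext_le s ext_union.
Proof.
move=> As; split=> [t st|c cs]; first by exists s.
by rewrite /= (ext_union_functionalE As).
Qed.

End ExtChainUnion.

Theorem cycle_functional_extends :
  exists u : seq G -> R, forall c, is_cycle c -> pairing idfun u c = lam c.
Proof.
have le_refl s : ext_le s s by [].
have le_trans r s t : ext_le r s -> ext_le s t -> ext_le r t.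
  move=> [rs rsL] [st stL]; split=> [x /rs/st //|c cr].
  by rewrite rsL // stL //; apply: bd_supported_sub cr.
have [|A A0 chA|s y sy|s sall] := @zorn_exhaust _ _ ext_le (fun s => (sval s).1)
    le_refl le_trans (fun s t x st => st.1 x) ext_bottom.
- by move=> s; split=> // c cs; have [_ _ _ ->] := svalP s.
- by exists (ext_union chA A0); apply: ext_union_ub.
- have [L' [YL' L'L]] := extends_on_extend (svalP s) sy.
  by exists (exist _ (_, L') YL'); [split=> [t st|c /L'L]; [left|]|right].
have [LD LZ LE Llam] := svalP s.
have sall_supp c : is_nchain n c -> supp (sval s).1 c by split.
exists (fun t => (sval s).2 [:: (1, t)]) => c cc; rewrite -Llam //.
case: cc => nc _; elim: c nc => [_|[r t] c IH /andP[/= nt nc]].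
  by have := LZ 0 [::] (sall_supp [::] isT); rewrite mul0r pairing_nil => <-.
have nt1 (a : R) : is_nchain n [:: (a, t)] by rewrite /is_nchain /= nt.
rewrite -cat1s pairing_cat IH // LD ?sall_supp //; congr (_ + _).
rewrite pairing_seq1 /= -LZ ?sall_supp //.
by apply: LE (sall_supp _ (nt1 _)) (sall_supp _ (nt1 _)) _ => t'; rewrite !coef_seq1 mulr1.
Qed.

End CycleFunctional.

Section CycleVanishingCochain.
Variables (R : idomainType) (K : fieldType) (rho : {rmorphism R -> K}).
Hypothesis rho_inj : injective rho.
Variables (G : groupType) (m : nat) (f : seq G -> K).
Implicit Types (D : seq G -> Prop) (h : seq G -> K) (c : chain R G).
Local Notation supp := (bd_supported m.+1).
Hypothesis f_cycles : forall c, supp (fun _ => False) c -> pairing rho f c = 0.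

Definition solves_on D h := forall c, supp D c -> pairing rho h (bd c) = pairing rho f c.

Lemma pairing_update h x a c :
  pairing rho (fun t => if t == x then a else h t) c =
  pairing rho (fun t => if t == x then 0 else h t) c + rho (coef c x) * a.
Proof.
elim: c => [|[r u] c IH]; first by rewrite !pairing_nil coef_nil rmorph0 mul0r addr0.
rewrite -cat1s !pairing_cat IH coef_cat rmorphD mulrDl !pairing_seq1 coef_seq1 /=.
by case: eqP => _; rewrite ?rmorph0 ?mulr0 ?mul0r ?addr0 ?add0r; ring.
Qed.

Section PivotStep.
Variables (D : seq G -> Prop) (h : seq G -> K) (x : seq G) (c0 : chain R G).
Let D' t := D t \/ t = x.
Let d := coef (bd c0) x.
Hypotheses (Dh : solves_on D h) (Dx : ~ D x) (c0D' : supp D' c0) (d_neq0 : d != 0).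

(* The value at [x] is forced by [c0]; any other chain reduces to one with boundary
   supported in [D] by subtracting a multiple of [c0]. *)
Definition pivot_value :=
  (pairing rho f c0 - pairing rho (fun t => if t == x then 0 else h t) (bd c0)) / rho d.

Let h' t := if t == x then pivot_value else h t.

Let h'_agree c : supp D c -> pairing rho h' (bd c) = pairing rho h (bd c).
Proof.
case=> _ cD; apply: eq_pairing_supp => t /cD Dt; rewrite /h'.
by case: eqP => // tx; case: Dx; rewrite -tx.
Qed.

Lemma solves_on_pivot : solves_on D' h'.
Proof.
have id0 : rho d != 0 by rewrite raddf_eq0.
have h'c0 : pairing rho h' (bd c0) = pairing rho f c0.
  by rewrite pairing_update -/d /pivot_value mulrC mulfVK // addrC subrK.
move=> c cD'; set e := coef (bd c) x.
have c2D : supp D (scalec d c ++ scalec (- e) c0).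
  apply: (@bd_supported_elim _ _ _ D x) => //; first exact: bd_supported_scalec.
  by rewrite coef_bd_scalec -/e -/d mulNr mulrC addrN.
have := Dh c2D; rewrite -h'_agree // !(bd_cat, pairing_cat) !pairing_bd.
rewrite !pairing_scalec -!pairing_bd h'c0 => /eqP.
rewrite -subr_eq0 opprD addrACA -!mulrBr subrr mulr0 addr0.
by rewrite mulf_eq0 (negbTE id0) subr_eq0 => /eqP.
Qed.

End PivotStep.

Lemma solves_on_extend D h x : solves_on D h -> ~ D x ->
  exists h', solves_on (fun t => D t \/ t = x) h' /\ forall t, D t -> h' t = h t.
Proof.
move=> Dh Dx; set D' := fun t => D t \/ t = x.
have [[c0 [c0D' d_neq0]]|no_pivot] :=
    pselect (exists c0, supp D' c0 /\ coef (bd c0) x != 0).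
  exists (fun t => if t == x then pivot_value h x c0 else h t).
  split; first exact: solves_on_pivot.
  by move=> t Dt; case: eqP => // tx; case: Dx; rewrite -tx.
exists h; split=> // c [nc cD']; apply: Dh; split=> // t nz.
have [tx|] := pselect (t = x); last by case: (cD' t nz).
by case: no_pivot; exists c; split=> //; rewrite -tx.
Qed.

Definition sol_state := {p : (seq G -> Prop) * (seq G -> K) | solves_on p.1 p.2}.

Definition sol_le (s s' : sol_state) :=
  (forall t, (sval s).1 t -> (sval s').1 t) /\
  (forall t, (sval s).1 t -> (sval s).2 t = (sval s').2 t).

Lemma solves_on_empty : solves_on (fun _ => False) (fun _ => 0).
Proof.
move=> c cc; rewrite f_cycles //.
by rewrite /pairing big1 // => y _; rewrite mulr0.
Qed.

Definition sol_bottom : sol_state := exist _ (fun _ => False, fun _ => 0) solves_on_empty.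

Section SolChainUnion.
Variable A : sol_state -> Prop.
Hypotheses (chA : chain_in sol_le A) (A0 : A sol_bottom).

Let dom (s : sol_state) t := (sval s).1 t.

Let dom_le s s' t : sol_le s s' -> dom s t -> dom s' t.
Proof. by case=> + _; apply. Qed.

Definition sol_union_dom t := exists2 s, A s & dom s t.

Definition sol_union_cochain t :=
  if pselect (exists s, A s /\ dom s t) is left H then (sval (sval (cid H))).2 t else 0.

Lemma sol_union_cochainE s t : A s -> dom s t -> sol_union_cochain t = (sval s).2 t.
Proof.
move=> As st; rewrite /sol_union_cochain; case: pselect => [H|[]]; last by exists s.
case: (cid H) => s' [As' s't] /=.
by have [[_ ->]|[_ ->]] := chA As As'.
Qed.

Lemma solves_on_union : solves_on sol_union_dom sol_union_cochain.
Proof.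
move=> c /bd_supportedE[nc cU].
have [|s [As sc]] := @chain_cover_seq _ _ sol_le dom dom_le A _ chA A0 (bd_support c).
  by move=> t /cU[s As st]; exists s.
have cs : supp (sval s).1 c by apply/bd_supportedE.
rewrite -(svalP s c cs); apply: eq_pairing_supp => t nz.
by apply: sol_union_cochainE => //; apply: cs.2.
Qed.

Definition sol_union : sol_state := exist _ (sol_union_dom, sol_union_cochain) solves_on_union.

Lemma sol_union_ub s : A s -> sol_le s sol_union.
Proof.
move=> As; split=> [t st|t st]; first by exists s.
by rewrite /= (sol_union_cochainE As).
Qed.

End SolChainUnion.

Theorem cycle_vanishing_coboundary :
  exists h : seq G -> K, forall g, size g = m.+1 -> f g = cdelta h g.
Proof.
have le_refl s : sol_le s s by [].
have le_trans r s t : sol_le r s -> sol_le s t -> sol_le r t.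
  move=> [rs rsh] [st sth]; split=> [y /rs/st //|y ry].
  by rewrite rsh // sth //; apply: rs.
have [|A A0 chA|s y sy|s sall] := @zorn_exhaust _ _ sol_le (fun s => (sval s).1)
    le_refl le_trans (fun s t x st => st.1 x) sol_bottom.
- by move=> s; split.
- by exists (sol_union chA A0); apply: sol_union_ub.
- have [h' [Dh' h'h]] := solves_on_extend (svalP s) sy.
  by exists (exist _ (_, h') Dh'); [split=> [t st|t /h'h]; [left|]|right].
exists (sval s).2 => g sg.
rewrite (cdelta_pairing rho) (svalP s) ?pairing_seq1 ?rmorph1 ?mul1r //.
by split=> //; rewrite /is_nchain /= sg eqxx.
Qed.

End CycleVanishingCochain.

Section NonArchimedean.
Variables (K : fieldType) (V : realType) (absK : K -> V).
Hypothesis absK_na : nonarch_abs absK.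

Lemma nonarch_abs0 : absK 0 = 0.
Proof. by case: absK_na => _ abs_eq0 _ _; apply/abs_eq0. Qed.

Lemma nonarch_abs1 : absK 1 = 1.
Proof.
case: absK_na => _ abs_eq0 absM _.
have a1 : absK 1 != 0 by apply/eqP => /abs_eq0/eqP; rewrite oner_eq0.
by apply: (mulIf a1); rewrite -absM !mul1r.
Qed.

Lemma nonarch_absN x : absK (- x) = absK x.
Proof.
case: absK_na => abs_ge0 _ absM _.
have : absK (-1) ^+ 2 == 1 by rewrite expr2 -absM mulN1r opprK nonarch_abs1.
rewrite sqrf_eq1 => /orP[/eqP aN1|/eqP aN1]; first by rewrite -mulN1r absM aN1 mul1r.
by have := abs_ge0 (-1); rewrite aN1 ler0N1.
Qed.

Lemma nonarch_abs_sum_le N (x : nat -> K) :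
  absK (\sum_(j < N) x j) <= \sum_(j < N) absK (x j).
Proof.
case: absK_na => abs_ge0 _ _ absD.
apply: (big_ind2 (fun s y => absK y <= s)); first by rewrite nonarch_abs0.
  move=> x1 x2 y1 y2 h1 h2; apply: le_trans (absD _ _) _.
  rewrite ge_max -[absK x2]addr0 -[absK y2]add0r.
  by rewrite !lerD // ?(le_trans (abs_ge0 _) h1) ?(le_trans (abs_ge0 _) h2).
by [].
Qed.

Lemma nonarch_abs_nat n : absK n%:R <= 1.
Proof.
elim: n => [|n IH]; first by rewrite nonarch_abs0 ler01.
case: absK_na => _ _ _ absD; rewrite -natr1; apply: le_trans (absD _ _) _.
by rewrite ge_max IH nonarch_abs1 lexx.
Qed.

Lemma nonarch_abs_int (z : int) : absK z%:~R <= 1.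
Proof.
by case: z => n; rewrite ?NegzE ?rmorphN ?nonarch_absN nonarch_abs_nat.
Qed.

End NonArchimedean.

Section HomologyGenerators.
Variables (R : idomainType) (G : groupType) (n : nat) (zs : seq (chain R G)).
Local Notation k := (size zs).
Local Notation z i := (nth [::] zs i).
Implicit Types (c : chain R G) (r w : nat -> R).

Definition represents c r := exists2 b, is_nchain n.+1 b &
  forall t, coef c t = \sum_(i < k) r i * coef (z i) t + coef (bd b) t.

Definition relation w := represents [::] w.

Lemma represents_cat c c' r r' : represents c r -> represents c' r' ->
  represents (c ++ c') (fun i => r i + r' i).
Proof.
move=> [b nb cb] [b' nb' cb']; exists (b ++ b'); first by rewrite is_nchain_cat nb nb'.
move=> t; rewrite coef_cat coef_bd_cat cb cb'.
under [in RHS]eq_bigr => i _ do rewrite mulrDl.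
by rewrite big_split /=; ring.
Qed.

Lemma represents_scalec a c r : represents c r -> represents (scalec a c) (fun i => a * r i).
Proof.
move=> [b nb cb]; exists (scalec a b); first by rewrite is_nchain_scalec.
move=> t; rewrite coef_scalec coef_bd_scalec cb mulrDr mulr_sumr.
by congr (_ + _); apply: eq_bigr => i _; rewrite mulrA.
Qed.

Lemma represents_eq c c' r : coef c =1 coef c' -> represents c r -> represents c' r.
Proof. by move=> cc' [b nb cb]; exists b => // t; rewrite -cc'. Qed.

Lemma comb_closed_relation : comb_closed relation.
Proof.
move=> a b w w' ww w'w.
exact: represents_cat (represents_scalec a ww) (represents_scalec b w'w).
Qed.

Lemma represents_relation c r r' : represents c r -> represents c r' ->
  relation (fun i => r i - r' i).
Proof.
move=> cr cr'; have -> : (fun i => r i - r' i) = (fun i => r i + -1 * r' i).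
  by apply: funext => i; rewrite mulN1r.
apply: represents_eq (represents_cat cr (represents_scalec (-1) cr')) => t.
by rewrite coef_cat coef_scalec mulN1r subrr coef_nil.
Qed.

End HomologyGenerators.

Lemma is_ncycleS (R : comNzRingType) (G : groupType) m (c : chain R G) :
  is_ncycle m.+1 c <-> bd_supported m.+1 (fun _ => False) c.
Proof.
split=> -[nc cc]; split=> //.
  by move=> t; rewrite cc ?eqxx.
by move=> _ t; apply/eqP/contraT => /cc.
Qed.

Section Periods.
Variables (R : idomainType) (G : groupType) (m : nat) (zs : seq (chain R G)).
Hypothesis R_pid : principal_ideals R.
Local Notation n := m.+1.
Local Notation k := (size zs).
Local Notation z i := (nth [::] zs i).
Local Notation represents := (represents n zs).
Local Notation relation := (relation n zs).
Hypothesis zs_cycles : forall i, (i < k)%N -> is_ncycle n (z i).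
Hypothesis zs_gen : forall c, is_ncycle n c -> exists (rs : seq R) (b : chain R G),
  size rs = k /\ is_nchain n.+1 b /\
  forall t, coef c t = \sum_(i < k) rs`_i * coef (z i) t + coef (bd b) t.

Definition cycle_coords c : nat -> R :=
  if pselect (exists r, represents c r) is left H then projT1 (cid H) else fun=> 0.

Lemma cycle_coordsP c : is_ncycle n c -> represents c (cycle_coords c).
Proof.
move=> cc; rewrite /cycle_coords; case: pselect => [H|[]]; first by case: (cid H).
by have [rs [b [_ [nb cb]]]] := zs_gen cc; exists (fun i => rs`_i), b.
Qed.

Lemma sum_delta i (x : nat -> R) : (i < k)%N -> \sum_(l < k) (l == i :> nat)%:R * x l = x i.
Proof.
move=> ik; under eq_bigr => l _ do rewrite mulr_natl mulrb.
by rewrite -big_mkcond big_ord1_eq ik.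
Qed.

Section PeriodVector.
Variable e : nat -> R.
Hypothesis e_orth : forall w, relation w -> \sum_(i < k) w i * e i = 0.

Definition period_functional c := \sum_(i < k) cycle_coords c i * e i.

Lemma period_functionalE c r : is_ncycle n c -> represents c r ->
  period_functional c = \sum_(i < k) r i * e i.
Proof.
move=> cc cr; apply/eqP; rewrite -subr_eq0 /period_functional -sumrB.
under eq_bigr => i _ do rewrite -mulrBl.
by apply/eqP; apply: e_orth (represents_relation (cycle_coordsP cc) cr).
Qed.

Lemma period_cocycle : exists u : seq G -> R,
  (forall g, size g = n.+1 -> pairing idfun u (bd [:: (1, g)]) = 0) /\
  (forall i, (i < k)%N -> pairing idfun u (z i) = e i).
Proof.
have cycle_cat (c c' : chain R G) : is_ncycle n c -> is_ncycle n c' -> is_ncycle n (c ++ c').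
  by move=> /is_ncycleS cc /is_ncycleS c'c; apply/is_ncycleS/bd_supported_cat.
have cycle_scalec a (c : chain R G) : is_ncycle n c -> is_ncycle n (scalec a c).
  by move=> /is_ncycleS cc; apply/is_ncycleS/bd_supported_scalec.
have lamD c c' : bd_supported n (fun _ => False) c -> bd_supported n (fun _ => False) c' ->
    period_functional (c ++ c') = period_functional c + period_functional c'.
  move=> /is_ncycleS cc /is_ncycleS c'c.
  rewrite (period_functionalE (cycle_cat _ _ cc c'c)
            (represents_cat (cycle_coordsP cc) (cycle_coordsP c'c))).
  by rewrite -big_split; apply: eq_bigr => i _; rewrite mulrDl.
have lamZ a c : bd_supported n (fun _ => False) c ->
    period_functional (scalec a c) = a * period_functional c.
  move=> /is_ncycleS cc.
  rewrite (period_functionalE (cycle_scalec a _ cc) (represents_scalec a (cycle_coordsP cc))).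
  by rewrite mulr_sumr; apply: eq_bigr => i _; rewrite mulrA.
have lamE c c' : bd_supported n (fun _ => False) c -> bd_supported n (fun _ => False) c' ->
    coef c =1 coef c' -> period_functional c = period_functional c'.
  move=> /is_ncycleS cc /is_ncycleS c'c cc'.
  by rewrite (period_functionalE c'c (represents_eq cc' (cycle_coordsP cc))).
have [u Hu] := cycle_functional_extends R_pid lamD lamZ lamE.
have u_cycle c : is_ncycle n c -> pairing idfun u c = period_functional c.
  by move/is_ncycleS/Hu.
exists u; split=> [g sg|i ik].
  have bg : is_ncycle n (bd [:: (1 : R, g)]).
    split; first by apply: bd_nchain; rewrite /is_nchain /= sg eqxx.
    by move=> _ x; apply: coef_bd_bd_seq1; rewrite sg.
  have rep0 : represents (bd [:: (1, g)]) (fun _ => 0).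
    exists [:: (1, g)]; first by rewrite /is_nchain /= sg eqxx.
    by move=> t; rewrite big1 ?add0r // => i _; rewrite mul0r.
  by rewrite u_cycle // (period_functionalE bg rep0) big1 // => i _; rewrite mul0r.
have rep_i : represents (z i) (fun l => (l == i)%:R).
  by exists [::] => // t; rewrite /bd /= coef_nil addr0 (sum_delta (fun l => coef (z l) t)).
rewrite u_cycle; last exact: zs_cycles.
by rewrite (period_functionalE (zs_cycles ik) rep_i) (sum_delta e).
Qed.

End PeriodVector.

End Periods.

Section Comparison.
Variables (R : idomainType) (K : fieldType) (V : realType) (absK : K -> V).
Variable rho : {rmorphism R -> K}.
Hypotheses (rho_inj : injective rho) (rho_le1 : forall r, absK (rho r) <= 1).
Hypotheses (absK_na : nonarch_abs absK) (R_pid : principal_ideals R).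
Variable G : groupType.

Lemma is_bounded_comb n N (a : nat -> K) (u : nat -> seq G -> R) :
  is_bounded absK n (fun g => \sum_(j < N) a j * rho (u j g)).
Proof.
case: absK_na => abs_ge0 _ absM _.
exists (\sum_(j < N) absK (a j)) => g _.
apply: le_trans (nonarch_abs_sum_le absK_na N (fun j => a j * rho (u j g))) _.
apply: ler_sum => j _; rewrite absM -[leRHS]mulr1.
by rewrite ler_wpM2l ?abs_ge0 ?rho_le1.
Qed.

Section Generators.
Variables (m : nat) (zs : seq (chain R G)).
Local Notation n := m.+1.
Local Notation k := (size zs).
Local Notation z i := (nth [::] zs i).
Hypothesis zs_cycles : forall i, (i < k)%N -> is_ncycle n (z i).
Hypothesis zs_gen : forall c, is_ncycle n c -> exists (rs : seq R) (b : chain R G),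
  size rs = k /\ is_nchain n.+1 b /\
  forall t, coef c t = \sum_(i < k) rs`_i * coef (z i) t + coef (bd b) t.

Lemma cocycle_periods_relation (f : seq G -> K) w : is_ncocycle n f ->
  relation n zs w -> \sum_(i < k) rho (w i) * pairing rho f (z i) = 0.
Proof.
move=> fc [b nb wb]; rewrite -pairing_lincomb.
rewrite (@eq_pairing_coef _ _ _ _ _ _ (scalec (-1) (bd b))).
  by rewrite pairing_scalec (pairing_cocycle_bd rho fc nb) mulr0.
move=> t; rewrite coef_lincomb coef_scalec mulN1r.
by apply/eqP; rewrite -addr_eq0 -wb coef_nil.
Qed.

Lemma cocycle_vanishing_on_cycles (phi : seq G -> K) : is_ncocycle n phi ->
  (forall i, (i < k)%N -> pairing rho phi (z i) = 0) ->
  forall c, bd_supported n (fun _ => False) c -> pairing rho phi c = 0.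
Proof.
move=> phic phiz c /is_ncycleS cc; have [rs [b [_ [nb cb]]]] := zs_gen cc.
rewrite (@eq_pairing_coef _ _ _ _ _ _ (lincomb zs (fun i => rs`_i) ++ bd b)).
  rewrite pairing_cat (pairing_cocycle_bd rho phic nb) addr0 pairing_lincomb.
  by rewrite big1 // => i _; rewrite phiz ?mulr0.
by move=> t; rewrite coef_cat coef_lincomb cb.
Qed.

Lemma comparison_surjective_succ : comparison_surjective absK G n.
Proof.
move=> f fc; pose v i := pairing rho f (z i).
have [es [es_orth es_span]] := annihilator_span rho_inj k (@comb_closed_relation _ _ n zs).
have [a va] := es_span v (fun w => cocycle_periods_relation fc).
pose e j := nth (fun _ => 0) es j.
have /choice[u uP] : forall j, exists u : seq G -> R, (j < size es)%N ->
    (forall g, size g = n.+1 -> pairing idfun u (bd [:: (1, g)]) = 0) /\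
    (forall i, (i < k)%N -> pairing idfun u (z i) = e j i).
  move=> j; have [js|] := pselect (j < size es)%N; last by exists (fun=> 0).
  have [u uP] := period_cocycle R_pid zs_cycles zs_gen (es_orth j js).
  by exists u.
pose fb g := \sum_(j < size es) a j * rho (u j g).
have fbc : is_ncocycle n fb.
  move=> g sg; rewrite (cdelta_pairing rho) pairing_sum_cochains big1 // => j _.
  by rewrite (proj1 (uP j (ltn_ord j))) // rmorph0 mulr0.
have phic : is_ncocycle n (fun g => f g - fb g).
  by move=> g sg; rewrite cdelta_subf fc // fbc // subrr.
have phiz i : (i < k)%N -> pairing rho (fun g => f g - fb g) (z i) = 0.
  move=> ik; rewrite pairing_subf pairing_sum_cochains -/(v i) va //.
  by apply/eqP; rewrite subr_eq0; apply/eqP/eq_bigr => j _; rewrite (proj2 (uP j (ltn_ord j))).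
have [h fh] := cycle_vanishing_coboundary rho_inj (cocycle_vanishing_on_cycles phic phiz).
exists fb; split=> //; first exact: is_bounded_comb.
by exists h.
Qed.

End Generators.

Theorem comparison_surjective_of_homology_fg n :
  homology_fg R G n -> comparison_surjective absK G n.
Proof.
case: n => [_ f fc|m [zs [zs_cycles zs_gen]]].
  exists f; split=> //; last by exists (fun _ => 0) => g _; rewrite subrr.
  by exists (absK (f [::])) => -[].
exact: comparison_surjective_succ zs_cycles zs_gen.
Qed.

End Comparison.

Lemma principal_ideals_field (F : fieldType) : principal_ideals F.
Proof.
move=> I I0 _; have [[x [Ix xn0]]|I_eq0] := pselect (exists x, I x /\ x != 0).
  by exists x => // y _; exists (y / x); rewrite mulfVK.
exists 0 => // y Iy; exists 0; rewrite mulr0.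
by apply/eqP/contraT => yn0; case: I_eq0; exists y.
Qed.

Lemma principal_ideals_int : principal_ideals int.
Proof.
move=> I I0 Icomb.
have [[x0 [Ix0 x0n0]]|I_eq0] := pselect (exists x, I x /\ x != 0); last first.
  exists 0 => // y Iy; exists 0; rewrite mulr0.
  by apply/eqP/contraT => yn0; case: I_eq0; exists y.
have IN x : I x -> I (- x).
  by move=> Ix; have := Icomb (-1) 0 x x Ix Ix; rewrite mul0r addr0 mulN1r.
have Ipos : exists N, (0 < N)%N && `[< I N%:Z >].
  exists `|x0|%N; rewrite absz_gt0 x0n0; apply/asboolP.
  by have [/ltz0_abs ->|/gez0_abs ->] := ltrP x0 0; [apply: IN|].
(* The least positive element of I generates it, since I contains the remainders. *)
have [N /andP[N0 /asboolP IN'] Nmin] := ex_minnP Ipos.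
exists N%:Z => // x Ix; exists (x %/ N)%Z.
have Ir : I (x %% N)%Z.
  have := Icomb 1 (- (x %/ N)%Z) x N%:Z Ix IN'.
  by rewrite mul1r mulNr {1}(divz_eq x N) [_ + (x %% N)%Z]addrC addrK.
have [r0|rn0] := eqVneq (x %% N)%Z 0; first by rewrite {1}(divz_eq x N) r0 addr0.
have r_ge0 : (0 <= x %% N)%Z by apply: modz_ge0; rewrite eqz_nat -lt0n.
have r_lt : (x %% N < N)%Z by apply: ltz_pmod; rewrite ltz_nat.
move: Ir rn0 r_ge0 r_lt; case: (x %% N)%Z => // r Ir rn0 _ rN.
have : (N <= r)%N by apply: Nmin; rewrite asboolT // andbT; lia.
lia.
Qed.

Section CharP.
Variables (K : fieldType) (V : realType) (absK : K -> V) (p : nat).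
Hypotheses (absK_na : nonarch_abs absK) (pK : p \in [pchar K]).
Local Notation Kp := (pPrimeCharType pK).

Lemma comparison_surjective_charp G n :
  homology_fg 'F_p G n -> comparison_surjective absK G n.
Proof.
have rho_le1 (x : 'F_p) : absK (in_alg Kp x) <= 1.
  by change (absK ((x : nat)%:R * (1 : K)) <= 1); rewrite mulr1 nonarch_abs_nat.
exact: (@comparison_surjective_of_homology_fg _ Kp V absK (in_alg Kp)
  (fmorph_inj _) rho_le1 absK_na (@principal_ideals_field _) G n).
Qed.

End CharP.

Section Char0.
Variables (K : fieldType) (V : realType) (absK : K -> V).
Hypotheses (absK_na : nonarch_abs absK) (K0 : [pchar K] =i pred0).

Lemma intr_char0_eq0 (z : int) : (z%:~R == 0 :> K) = (z == 0).
Proof.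
have natr_eq0 := (pcharf0P K).1 K0.
by case: z => m; rewrite ?NegzE ?rmorphN ?oppr_eq0 /= natr_eq0.
Qed.

Lemma intr_char0_inj : injective (intr : int -> K).
Proof.
by move=> z1 z2 /eqP; rewrite -subr_eq0 -rmorphB intr_char0_eq0 subr_eq0 => /eqP.
Qed.

(* [ratr] itself; the unused argument lets the morphism instances below use it. *)
Definition ratr_char0 of [pchar K] =i pred0 := @ratr K.

Lemma ratr_char0_frac (a b : int) : b != 0 ->
  ratr_char0 K0 (a%:~R / b%:~R) = a%:~R / b%:~R.
Proof.
move=> bn0; set q : rat := a%:~R / b%:~R.
have cross : numq q * b = a * denq q.
  apply: (@intr_inj rat); rewrite !rmorphM /= numqE /q.
  by rewrite mulrAC divfK ?intr_eq0 // mulrC.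
rewrite /ratr_char0 /ratr; apply/eqP.
by rewrite eqr_div ?intr_char0_eq0 ?denq_eq0 // -!rmorphM cross mulrC.
Qed.

Let num_den (x : rat) : x = (numq x)%:~R / (denq x)%:~R.
Proof. by rewrite divq_num_den. Qed.

Let den_neq0 (x : rat) : (denq x)%:~R != 0 :> K.
Proof. by rewrite intr_char0_eq0 denq_eq0. Qed.

Let int_frac_sub (F : fieldType) (a b c d : int) : b%:~R != 0 :> F -> d%:~R != 0 :> F ->
  a%:~R / b%:~R - c%:~R / d%:~R = (a * d - c * b)%:~R / (b * d)%:~R :> F.
Proof. by move=> bn0 dn0; rewrite rmorphB !rmorphM; field; rewrite dn0 bn0. Qed.

Fact ratr_char0_is_zmod_morphism : zmod_morphism (ratr_char0 K0).
Proof.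
move=> x y; rewrite {1}(num_den x) {1}(num_den y) int_frac_sub ?intr_eq0 ?denq_eq0 //.
rewrite ratr_char0_frac ?mulf_neq0 ?denq_eq0 //.
by rewrite /ratr_char0 /ratr int_frac_sub ?den_neq0.
Qed.

Fact ratr_char0_is_monoid_morphism : monoid_morphism (ratr_char0 K0).
Proof.
split=> [|x y]; first by rewrite -[1]divr1 -[1 : rat]/(1%:~R) ratr_char0_frac ?divr1.
rewrite {1}(num_den x) {1}(num_den y) mulf_div -!rmorphM ratr_char0_frac ?mulf_neq0 ?denq_eq0 //.
by rewrite /ratr_char0 /ratr mulf_div -!rmorphM.
Qed.

HB.instance Definition _ := GRing.isZmodMorphism.Build rat K (ratr_char0 K0)
  ratr_char0_is_zmod_morphism.
HB.instance Definition _ := GRing.isMonoidMorphism.Build rat K (ratr_char0 K0)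
  ratr_char0_is_monoid_morphism.

Lemma nonarch_abs_ratr (K_res0 : residue_char_zero absK) x : absK (ratr_char0 K0 x) <= 1.
Proof.
case: absK_na => _ abs_eq0 absM _.
have aden : absK (denq x)%:~R = 1.
  have := denq_gt0 x; case: (denq x) => // d d0.
  by have := nonarch_abs_nat absK_na d; rewrite le_eqVlt => /orP[/eqP//|/(K_res0 d d0)].
have aV y : y != 0 -> absK y^-1 = (absK y)^-1.
  move=> yn0; have ay : absK y != 0 by apply: contra yn0 => /eqP/abs_eq0 ->.
  by apply: (mulfI ay); rewrite -absM !divff // nonarch_abs1.
rewrite /ratr_char0 /ratr absM aV ?den_neq0 // aden invr1 mulr1.
exact: nonarch_abs_int.
Qed.

Lemma comparison_surjective_char0_rat G n : residue_char_zero absK ->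
  homology_fg rat G n -> comparison_surjective absK G n.
Proof.
move=> K_res0; exact: (comparison_surjective_of_homology_fg (fmorph_inj _)
  (nonarch_abs_ratr K_res0) absK_na (@principal_ideals_field _)).
Qed.

Lemma comparison_surjective_char0_int G n :
  homology_fg int G n -> comparison_surjective absK G n.
Proof.
exact: (comparison_surjective_of_homology_fg intr_char0_inj
  (nonarch_abs_int absK_na) absK_na principal_ideals_int).
Qed.

End Char0.

Theorem proposition8p12 (K : fieldType) (V : realType) (absK : K -> V)
  (G : groupType) (n : nat) :
  nonarch_abs absK ->
  [\/ exists2 p : nat, p \in [pchar K] & homology_fg 'F_p G n,
      [/\ [pchar K] =i pred0, residue_char_zero absK & homology_fg rat G n]
    | [/\ [pchar K] =i pred0,
          (exists2 p : nat, (0 < p)%N & residue_char_eq absK p)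
        & homology_fg int G n]] ->
  comparison_surjective absK G n.
Proof.
move=> absK_na [[p pK]|[K0 K_res0]|[K0 _]].
- exact: comparison_surjective_charp.
- exact: comparison_surjective_char0_rat.
- exact: comparison_surjective_char0_int.
Qed.
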